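(* Let $X$ be a $k$-dimensional simplicial complex with $n$ vertices and complete $(k-1)$-skeleton. Fix $d>0$ and $f\ge0$ such that for every $F\in X_{k-2}$, $$\sum_{v\in V\setminus F}\big(\deg_{\mathrm{lk}F}(v)-d\big)^2\le f^2(n-k+1).$$ Then (i) $|\langle A_{k-1}b,b\rangle-d|\le kf$ for all $b\in B^{k-1}(X)$ with $\|b\|=1$, and (ii) $|\langle A_{k-1}b,z\rangle|\le kf$ for all unit $b\in B^{k-1}(X)$ and unit $z$ orthogonal to $B^{k-1}(X)$.
   Context: Standard Euclidean inner products and norms. Complexes have linearly ordered vertex sets $V$; $X_i$ is the set of $i$-faces; $[F:G]$ is the oriented incidence number ($(-1)^j$ if $F\setminus G=\{v_j\}$, $F=\{v_0<\dots<v_i\}$; $0$ if $G\not\subseteq F$). Complete $(k-1)$-skeleton: every vertex set of size at most $k$ is a face. $B^{k-1}(X)=\operatorname{im}\delta_{k-2}$, $(\delta f)(H)=\sum_G[H:G]f(G)$. $A_{k-1}(X)$ is the $X_{k-1}\times X_{k-1}$ matrix with entry $[F:F\cap G][G:F\cap G]$ if $|F\cap G|=k-1$ and $F\cup G\in X_k$, else $0$. For $F\in X_{k-2}$, $\mathrm{lk}\,F$ is the graph on $V\setminus F$ with edges $\{u,v\}$ such that $F\cup\{u,v\}\in X_k$. *)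

From HB Require Import structures.
From mathcomp Require Import all_boot all_order all_algebra.
Set Implicit Arguments. Unset Strict Implicit. Unset Printing Implicit Defensive.
Import Order.TTheory GRing.Theory Num.Theory.
Local Open Scope ring_scope.

Definition simplicial_complex n (X : {set {set 'I_n}}) : Prop :=
  forall F G : {set 'I_n}, F \in X -> G \subset F -> G \in X.

Definition complex_dim n (X : {set {set 'I_n}}) (k : nat) : Prop :=
  (forall F, F \in X -> (#|F| <= k.+1)%N) /\ (exists F, F \in X /\ #|F| = k.+1).

(* complete (k-1)-skeleton: every vertex set of size at most k is a face *)
Definition complete_skeleton n (X : {set {set 'I_n}}) (k : nat) : Prop :=
  forall F : {set 'I_n}, (#|F| <= k)%N -> F \in X.

(* faces with exactly m vertices, i.e. X_{m-1} *)
Definition faces_sz n (X : {set {set 'I_n}}) (m : nat) : {set {set 'I_n}} :=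
  [set F in X | #|F| == m].

Definition incid (R : pzRingType) n (F G : {set 'I_n}) : R :=
  \sum_(v in F) (if G == F :\ v then (-1) ^+ #|[set u in F | (u < v)%N]| else 0).

(* cochains are functions {set 'I_n} -> R, only their values on the relevant
   faces matter. Coboundary from cochains on faces of size m to size m+1. *)
Definition coboundary (R : pzRingType) n (X : {set {set 'I_n}}) (m : nat)
  (g : {set 'I_n} -> R) (H : {set 'I_n}) : R :=
  \sum_(G in faces_sz X m) incid R H G * g G.

Definition ip (R : pzRingType) n (X : {set {set 'I_n}}) (k : nat)
  (u v : {set 'I_n} -> R) : R :=
  \sum_(F in faces_sz X k) u F * v F.

Definition inB (R : pzRingType) n (X : {set {set 'I_n}}) (k : nat)
  (b : {set 'I_n} -> R) : Prop :=
  exists g : {set 'I_n} -> R,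
    forall H, H \in faces_sz X k -> b H = coboundary X k.-1 g H.

Definition Amat (R : pzRingType) n (X : {set {set 'I_n}}) (k : nat)
  (F G : {set 'I_n}) : R :=
  if (#|F :&: G| == k.-1) && (F :|: G \in faces_sz X k.+1)
  then incid R F (F :&: G) * incid R G (F :&: G) else 0.

Definition Aop (R : pzRingType) n (X : {set {set 'I_n}}) (k : nat)
  (b : {set 'I_n} -> R) (F : {set 'I_n}) : R :=
  \sum_(G in faces_sz X k) Amat R X k F G * b G.

(* degree of v in the link graph lk F (graph on V \ F, edges {u,v} with
   F ∪ {u,v} a k-face) *)
Definition lk_deg n (X : {set {set 'I_n}}) (k : nat) (F : {set 'I_n}) (v : 'I_n) : nat :=
  #|[set u : 'I_n | (u \notin F) && (u != v) && (F :|: [set u; v] \in faces_sz X k.+1)]|.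

From HB Require Import structures.
From mathcomp Require Import all_boot all_order all_algebra.
From mathcomp Require Import ring.
Import Order.TTheory GRing.Theory Num.Theory.
Local Open Scope ring_scope.
Set Implicit Arguments. Unset Strict Implicit. Unset Printing Implicit Defensive.

(* With a complete (k-1)-skeleton, every b in B^{k-1} is a cocycle of the full
   simplex on V.  Exchanging one vertex of a (k-1)-face F for a vertex w outside
   it and using (delta b)(F + w) = 0 shows that A_{k-1} b = D b, where D F is the
   number of k-faces containing F.  Hence <A b, x> - d <b, x> is the sum of
   (D F - d) b F x F, and by Cauchy-Schwarz both claims reduce to
   sum_F (D F - d)^2 b F^2 <= k f^2 |b|^2.  The full-simplex identity
   delta delta^* + delta^* delta = n gives n b = delta a with a = delta^* b and
   |a|^2 = n |b|^2, so n^2 b F^2 <= k sum_{v in F} a(F - v)^2.  Grouping the pairs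
   (F, v) by the (k-2)-face G = F - v, the hypothesis on lk G bounds the sum by
   k f^2 (n-k+1)/n |b|^2. *)

Definition sgn (R : pzRingType) n (H : {set 'I_n}) (v : 'I_n) : R :=
  (-1) ^+ #|[set u in H | (u < v)%N]|.

Definition cobound (R : pzRingType) n (b : {set 'I_n} -> R) (H : {set 'I_n}) : R :=
  \sum_(v in H) sgn R H v * b (H :\ v).

Definition cobound_adj (R : pzRingType) n (b : {set 'I_n} -> R) (G : {set 'I_n}) : R :=
  \sum_(w in ~: G) sgn R (w |: G) w * b (w |: G).

Definition exchanges n (F : {set 'I_n}) : {set {set 'I_n}} :=
  [set p.2 |: (F :\ p.1) | p in setX F (~: F)].

Definition updeg n (X : {set {set 'I_n}}) (k : nat) (F : {set 'I_n}) : nat :=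
  #|[set w | (w \notin F) && (w |: F \in faces_sz X k.+1)]|.

Section SetD1.

Variable n : nat.
Implicit Types (F G H : {set 'I_n}) (v w : 'I_n).

Lemma cardsD1S m F v : v \in F -> #|F| = m.+1 -> #|F :\ v| = m.
Proof. by move=> vF; rewrite (cardsD1 v) vF add1n => -[]. Qed.

Lemma setD1C H v w : H :\ v :\ w = H :\ w :\ v.
Proof. by apply/setP => x; rewrite !inE andbCA. Qed.

Lemma setU1D1 F v w : v != w -> (w |: F) :\ v = w |: (F :\ v).
Proof.
by move=> vw; apply/setP => x; rewrite !inE; case: (eqVneq x v) => // ->; rewrite (negPf vw).
Qed.

Lemma setCD1 F v : v \in F -> ~: (F :\ v) = v |: ~: F.
Proof. by move=> vF; apply/setP => x; rewrite !inE negb_and negbK; case: eqVneq => // ->. Qed.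

End SetD1.

Lemma sgn_sqr (R : pzRingType) n (H : {set 'I_n}) v : sgn R H v * sgn R H v = 1.
Proof. by rewrite /sgn -exprD -signr_odd oddD addbb. Qed.

Lemma sgn_swap (R : comPzRingType) n (H : {set 'I_n}) v w :
  v \in H -> w \in H -> v != w ->
  sgn R H v * sgn R (H :\ v) w = - (sgn R H w * sgn R (H :\ w) v).
Proof.
wlog lt_vw : v w / (v < w)%N => [hwlog vH wH vw|vH wH _].
  case: (ltngtP v w) => [lt|gt|/val_inj eq_vw]; first exact: hwlog.
    by rewrite (hwlog w v) ?opprK // eq_sym.
  by rewrite eq_vw eqxx in vw.
have Ew : [set u in H :\ v | (u < w)%N] = [set u in H | (u < w)%N] :\ v.
  by apply/setP => u; rewrite !inE andbA.
have Ev : [set u in H :\ w | (u < v)%N] = [set u in H | (u < v)%N].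
  apply/setP => u; rewrite !inE; case: (eqVneq u w) => [->|//].
  by rewrite (ltnNge w v) (ltnW lt_vw) !andbF.
have card_w : #|[set u in H | (u < w)%N]| = (#|[set u in H | (u < w)%N] :\ v|).+1.
  by rewrite (cardsD1 v) !inE vH lt_vw.
rewrite /sgn Ew Ev card_w exprS; ring.
Qed.

Lemma incid_setD1 (R : pzRingType) n (F : {set 'I_n}) v :
  v \in F -> incid R F (F :\ v) = sgn R F v.
Proof.
move=> vF; rewrite /incid (bigD1 v) //= eqxx big1 ?addr0 // => u /andP[uF uv].
case: eqP => // E; have : v \in F :\ u by rewrite !inE vF eq_sym uv.
by rewrite -E !inE eqxx.
Qed.

Lemma cobound_cobound (R : numDomainType) n (h : {set 'I_n} -> R) H :
  cobound (cobound h) H = 0.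
Proof.
pose t u v : R := sgn R H u * sgn R (H :\ u) v * h (H :\ u :\ v).
have E : cobound (cobound h) H =
    \sum_u \sum_v (if (u \in H) && (v \in H :\ u) then t u v else 0).
  rewrite /cobound big_mkcond /=; apply: eq_bigr => u _.
  case: (boolP (u \in H)) => uH /=; last by rewrite big1 // => v _; case: ifP.
  rewrite mulr_sumr big_mkcond /=; apply: eq_bigr => v _.
  by case: ifP => // _; rewrite /t mulrA.
(* the involution (u, v) <-> (v, u) reverses the sign of every term *)
have anti : cobound (cobound h) H = - cobound (cobound h) H.
  rewrite {1}E exchange_big /= E -sumrN; apply: eq_bigr => v _.
  rewrite -sumrN; apply: eq_bigr => u _; rewrite !inE [v == u]eq_sym.
  case: (eqVneq u v) => [|uv]; rewrite ?andbF /= ?oppr0 //.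
  case: (boolP (u \in H)) => uH; case: (boolP (v \in H)) => vH; rewrite /= ?oppr0 //.
  by rewrite /t setD1C (sgn_swap _ uH vH uv) mulNr.
have := mulrn_eq0 (cobound (cobound h) H) 2.
by rewrite mulr2n {2}anti subrr eqxx => /esym/eqP.
Qed.

Section Complete.

Variables (n : nat) (X : {set {set 'I_n}}).
Implicit Types F H : {set 'I_n}.

Lemma faces_sz_complete k m F :
  complete_skeleton X k -> (m <= k)%N -> (F \in faces_sz X m) = (#|F| == m).
Proof.
move=> cX le_mk; rewrite inE; case: eqP => [cF|_]; rewrite ?andbF ?andbT //.
by apply: cX; rewrite cF.
Qed.

Lemma coboundary_complete (R : pzRingType) m (h : {set 'I_n} -> R) F :
  complete_skeleton X m.+1 -> #|F| = m.+1 -> coboundary X m h F = cobound h F.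
Proof.
move=> cX cF; rewrite /coboundary /incid.
under eq_bigr do rewrite mulr_suml.
rewrite exchange_big /=; apply: eq_bigr => v vF.
have FvX : F :\ v \in faces_sz X m by rewrite (faces_sz_complete _ cX) // (cardsD1S vF cF).
rewrite (bigD1 (F :\ v)) //= eqxx big1 ?addr0 // => G /andP[_ /negPf ->].
by rewrite mul0r.
Qed.

Lemma inB_closed (R : numDomainType) m (b : {set 'I_n} -> R) :
  complete_skeleton X m.+1 -> inB X m.+1 b -> forall H, #|H| = m.+2 -> cobound b H = 0.
Proof.
move=> cX [h bE] H cH; rewrite -(cobound_cobound h H); apply: eq_bigr => u uH.
have cHu := cardsD1S uH cH.
by rewrite bE ?(faces_sz_complete _ cX) ?cHu // coboundary_complete.
Qed.

End Complete.

Lemma cobound_setU1 (R : pzRingType) n (b : {set 'I_n} -> R) (F : {set 'I_n}) w :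
  w \notin F -> cobound b (w |: F) =
    sgn R (w |: F) w * b F + \sum_(v in F) sgn R (w |: F) v * b (w |: (F :\ v)).
Proof.
move=> wF; rewrite /cobound big_setU1 //= setU1K //; congr (_ + _).
by apply: eq_bigr => v vF; rewrite setU1D1 //; apply: contraNneq wF => <-.
Qed.

Lemma closed_exchange_sum (R : comPzRingType) n (b : {set 'I_n} -> R) (F : {set 'I_n}) w :
  w \notin F -> cobound b (w |: F) = 0 ->
  \sum_(v in F) sgn R F v * sgn R (w |: (F :\ v)) w * b (w |: (F :\ v)) = b F.
Proof.
move=> wF; rewrite cobound_setU1 // => closed.
set H := w |: F; set s := sgn R H w.
have sgn_exchange v : v \in F -> sgn R F v * sgn R (w |: (F :\ v)) w = - (s * sgn R H v).
  move=> vF; have vw : v != w by apply: contraNneq wF => <-.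
  have vH : v \in H by rewrite setU1r.
  have := sgn_swap R vH (setU11 w F) vw; rewrite /H setU1K // setU1D1 // => swap.
  transitivity (sgn R H v * sgn R F v * (sgn R H v * sgn R (w |: (F :\ v)) w)).
    by rewrite mulrACA sgn_sqr mul1r.
  by rewrite swap mulrN mulrACA sgn_sqr mulr1 mulrC.
under eq_bigr => v vF do rewrite sgn_exchange // mulNr -mulrA.
rewrite sumrN -mulr_sumr.
have -> : \sum_(v in F) sgn R H v * b (w |: (F :\ v)) = - (s * b F).
  by apply/eqP; rewrite -addr_eq0 addrC closed.
by rewrite mulrN opprK mulrA sgn_sqr mul1r.
Qed.

Lemma sum_setD1_pairs (R : nmodType) n m (phi : {set 'I_n} -> 'I_n -> R) :
  \sum_(F : {set 'I_n} | #|F| == m.+1) \sum_(v in F) phi (F :\ v) v =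
  \sum_(G : {set 'I_n} | #|G| == m) \sum_(w in ~: G) phi G w.
Proof.
rewrite (exchange_big_dep xpredT) //= [RHS](exchange_big_dep xpredT) //=.
apply: eq_bigr => v _.
rewrite (reindex_onto (fun G => v |: G) (fun F => F :\ v)) /=; last first.
  by move=> F /andP[_ vF]; rewrite setD1K.
apply: eq_big => [G|G /andP[_ /eqP ->] //].
rewrite setU11 andbT inE cardsU1.
case: (boolP (v \in G)) => vG /=.
  by rewrite andbF; apply/negP => /andP[_ /eqP Gv]; move: vG; rewrite -Gv setD11.
by rewrite setU1K // eqxx andbT add1n eqSS.
Qed.

Lemma cobound_adjoint (R : comPzRingType) n m (b g : {set 'I_n} -> R) :
  \sum_(F : {set 'I_n} | #|F| == m.+1) b F * cobound g F =
  \sum_(G : {set 'I_n} | #|G| == m) cobound_adj b G * g G.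
Proof.
under eq_bigr => F _ do rewrite /cobound mulr_sumr.
under [RHS]eq_bigr => G _ do rewrite /cobound_adj mulr_suml.
rewrite -(sum_setD1_pairs _ (fun G w => sgn R (w |: G) w * b (w |: G) * g G)).
apply: eq_bigr => F _; apply: eq_bigr => v vF; rewrite setD1K //; ring.
Qed.

(* On the full simplex, cobound * cobound_adj + cobound_adj * cobound = n; here
   the second term vanishes. *)
Lemma cobound_adjK (R : comPzRingType) n (b : {set 'I_n} -> R) (F : {set 'I_n}) :
  (forall w, w \notin F -> cobound b (w |: F) = 0) ->
  cobound (cobound_adj b) F = n%:R * b F.
Proof.
move=> closed; rewrite /cobound /cobound_adj.
under eq_bigr => v vF do
  rewrite setCD1 // big_setU1 ?inE ?negbK //= setD1K // mulrDr mulrA sgn_sqr mul1r mulr_sumr.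
rewrite big_split /= exchange_big /=.
have exchange w : w \in ~: F -> \sum_(v in F) sgn R F v *
    (sgn R (w |: (F :\ v)) w * b (w |: (F :\ v))) = b F.
  rewrite inE => wF; rewrite -[RHS](closed_exchange_sum wF (closed w wF)).
  by apply: eq_bigr => v _; rewrite mulrA.
rewrite (eq_bigr _ exchange) !sumr_const -mulrnDr cardsC card_ord.
by rewrite mulr_natl.
Qed.

Section Adjacency.

Variables (n : nat) (X : {set {set 'I_n}}) (m : nat).
Implicit Types (F G : {set 'I_n}) (v w : 'I_n).

Lemma Amat_exchange (R : pzRingType) F v w :
  #|F| = m.+1 -> v \in F -> w \notin F ->
  Amat R X m.+1 F (w |: (F :\ v)) =
  if w |: F \in faces_sz X m.+2 then sgn R F v * sgn R (w |: (F :\ v)) w else 0.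
Proof.
move=> cF vF wF; have wFv : w \notin F :\ v by rewrite inE negb_and wF orbT.
have capE : F :&: (w |: (F :\ v)) = F :\ v.
  apply/setP => x; rewrite !inE; case: (eqVneq x w) => [->|_] /=.
    by rewrite (negPf wF) andbF.
  by rewrite andbCA andbb.
have cupE : F :|: (w |: (F :\ v)) = w |: F.
  by apply/setP => x; rewrite !inE; case: (x \in F); rewrite ?orbT ?andbF ?orbF.
rewrite /Amat capE cupE (cardsD1S vF cF) eqxx /=; case: ifP => // _.
have := incid_setD1 R (setU11 w (F :\ v)); rewrite setU1K // => ->.
by rewrite incid_setD1.
Qed.

Lemma Amat_notin_exchanges (R : pzRingType) F G :
  #|F| = m.+1 -> #|G| = m.+1 ->
  G \notin exchanges F -> Amat R X m.+1 F G = 0.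
Proof.
move=> cF cG; apply: contraNeq; rewrite /Amat; case: ifP; last by rewrite eqxx.
move=> /andP[/eqP cI _] _.
have /cards1P[v Dv] : #|F :\: G| == 1%N by rewrite cardsD cF cI subSnn.
have /cards1P[w Dw] : #|G :\: F| == 1%N by rewrite cardsD cG setIC cI subSnn.
have vE x : (x \notin G) && (x \in F) = (x == v) by rewrite -in_setD Dv inE.
have wE x : (x \notin F) && (x \in G) = (x == w) by rewrite -in_setD Dw inE.
have /andP[_ vF] := etrans (vE v) (eqxx v).
have /andP[wF _] := etrans (wE w) (eqxx w).
apply/imsetP; exists (v, w); first by rewrite in_setX inE vF wF.
apply/setP => x; rewrite !inE /=; move: (vE x) (wE x).
by case: (x \in F); case: (x \in G); case: (x == v); case: (x == w).
Qed.

Lemma exchange_inj F : {in setX F (~: F) &, injective (fun p => p.2 |: (F :\ p.1))}.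
Proof.
have exchangeD v w : v \in F -> w \notin F ->
    (F :\: (w |: (F :\ v)) = [set v]) * ((w |: (F :\ v)) :\: F = [set w]).
  move=> vF wF; have vw : v != w by apply: contraNneq wF => <-.
  split; apply/setP => x; rewrite !inE.
    case: (eqVneq x v) => [->|_]; first by rewrite (negPf vw) vF.
    by case: (x \in F); rewrite ?orbT ?andbF.
  case: (eqVneq x w) => [->|_]; first by rewrite wF.
  by case: (x \in F); rewrite ?andbF.
move=> [v w] [v' w']; rewrite !in_setX !inE /= => /andP[vF wF] /andP[vF' wF'] E.
have [Dv Dw] := exchangeD v w vF wF; have [Dv' Dw'] := exchangeD v' w' vF' wF'.
rewrite E in Dv Dw.
by rewrite (set1_inj (etrans (esym Dv) Dv')) (set1_inj (etrans (esym Dw) Dw')).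
Qed.

Lemma Aop_closed (R : comPzRingType) (b : {set 'I_n} -> R) F :
  complete_skeleton X m.+1 -> #|F| = m.+1 ->
  (forall w, w \notin F -> cobound b (w |: F) = 0) ->
  Aop X m.+1 b F = (updeg X m.+1 F)%:R * b F.
Proof.
move=> cX cF closed; rewrite /Aop.
have exchangesS : exchanges F \subset faces_sz X m.+1.
  apply/subsetP => G /imsetP[[v w]]; rewrite in_setX inE /= => /andP[vF wF] ->.
  have wFv : w \notin F :\ v by rewrite inE negb_and wF orbT.
  by rewrite (faces_sz_complete _ cX) // cardsU1 wFv (cardsD1S vF cF).
rewrite (big_setID (exchanges F)) /= (setIidPr exchangesS) [X in _ + X]big1 ?addr0; last first.
  move=> G; rewrite in_setD => /andP[G_notin]; rewrite (faces_sz_complete _ cX) // => /eqP cG.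
  by rewrite Amat_notin_exchanges ?mul0r.
rewrite big_imset /=; last exact: exchange_inj.
transitivity (\sum_(v in F) \sum_(w in ~: F)
    Amat R X m.+1 F (w |: (F :\ v)) * b (w |: (F :\ v))).
  by rewrite pair_big /=; apply: eq_bigl => -[v w]; rewrite in_setX.
rewrite exchange_big /updeg mulr_natl -sumr_const big_mkcond /=.
rewrite [RHS]big_mkcond; apply: eq_bigr => w _; rewrite !inE.
case: (boolP (w \in F)) => //= wF.
case: ifP => wFX.
  rewrite -[RHS](closed_exchange_sum wF (closed w wF)); apply: eq_bigr => v vF.
  by rewrite (Amat_exchange R cF vF wF) inE wFX.
by rewrite big1 // => v vF; rewrite (Amat_exchange R cF vF wF) inE wFX mul0r.
Qed.

End Adjacency.

Lemma lk_deg_updeg n (X : {set {set 'I_n}}) k (G : {set 'I_n}) w :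
  w \notin G -> lk_deg X k G w = updeg X k (w |: G).
Proof.
move=> wG; rewrite /lk_deg /updeg; apply: eq_card => u; rewrite !inE.
have -> : G :|: [set u; w] = u |: (w |: G).
  by apply/setP => x; rewrite !inE; case: (x == u); case: (x == w); case: (x \in G).
by rewrite negb_or; case: (u == w); case: (u \in G).
Qed.

Lemma ip_complete (R : pzRingType) n (X : {set {set 'I_n}}) m (u v : {set 'I_n} -> R) :
  complete_skeleton X m.+1 ->
  ip X m.+1 u v = \sum_(F : {set 'I_n} | #|F| == m.+1) u F * v F.
Proof. by move=> cX; apply: eq_bigl => F; rewrite (faces_sz_complete _ cX). Qed.

Lemma sum_lk_deg (R : nmodType) n (X : {set {set 'I_n}}) k (phi : nat -> R) (G : {set 'I_n}) :
  \sum_(w in ~: G) phi (updeg X k (w |: G)) = \sum_(v | v \notin G) phi (lk_deg X k G v).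
Proof. by apply: eq_big => [w|w]; rewrite inE // => wG; rewrite lk_deg_updeg. Qed.

Lemma ip_Aop_closed (R : numDomainType) n (X : {set {set 'I_n}}) m (b x : {set 'I_n} -> R) d :
  complete_skeleton X m.+1 -> inB X m.+1 b ->
  ip X m.+1 (Aop X m.+1 b) x - d * ip X m.+1 b x =
  \sum_(F : {set 'I_n} | #|F| == m.+1) ((updeg X m.+1 F)%:R - d) * b F * x F.
Proof.
move=> cX bB; rewrite !ip_complete // mulr_sumr -sumrB; apply: eq_bigr => F /eqP cF.
rewrite (Aop_closed cX cF) => [|w wF]; first by ring.
by apply: (inB_closed cX bB); rewrite cardsU1 wF cF.
Qed.

Lemma cauchy_schwarz (R : realFieldType) (I : finType) (P : pred I) (a c : I -> R) :
  (\sum_(i | P i) a i * c i) ^+ 2 <= (\sum_(i | P i) a i ^+ 2) * (\sum_(i | P i) c i ^+ 2).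
Proof.
set A := \sum_(i | P i) a i ^+ 2; set B := \sum_(i | P i) c i ^+ 2.
set C := \sum_(i | P i) a i * c i.
have A_ge0 : 0 <= A by apply: sumr_ge0 => i _; apply: sqr_ge0.
have [A0|A_neq0] := eqVneq A 0.
  have a0 i : P i -> a i = 0.
    move=> Pi; apply/eqP; rewrite -sqrf_eq0; apply/eqP.
    by apply: (psumr_eq0P _ A0) => // j _; apply: sqr_ge0.
  have -> : C = 0 by rewrite /C big1 // => i Pi; rewrite a0 // mul0r.
  by rewrite A0 expr0n mul0r.
have E : \sum_(i | P i) (A * c i - C * a i) ^+ 2 = A * (A * B - C ^+ 2).
  transitivity (\sum_(i | P i) (A ^+ 2 * c i ^+ 2 - 2 * A * C * (a i * c i) + C ^+ 2 * a i ^+ 2)).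
    by apply: eq_bigr => i _; ring.
  by rewrite big_split sumrB /= -!mulr_sumr -/A -/B -/C; ring.
have : 0 <= A * (A * B - C ^+ 2) by rewrite -E sumr_ge0 // => i _; apply: sqr_ge0.
by rewrite pmulr_rge0 ?subr_ge0 // lt_def A_neq0.
Qed.

Lemma normr_sum_mul_le (R : realFieldType) (I : finType) (P : pred I) (y x : I -> R) c :
  0 <= c -> \sum_(i | P i) y i ^+ 2 <= c ^+ 2 -> \sum_(i | P i) x i ^+ 2 = 1 ->
  `|\sum_(i | P i) y i * x i| <= c.
Proof.
move=> c_ge0 y_le x1; rewrite -ler_sqr ?nnegrE ?normr_ge0 // real_normK ?num_real //.
by apply: le_trans (cauchy_schwarz P y x) _; rewrite x1 mulr1.
Qed.

Lemma closed_weighted_bound (R : realFieldType) n m (b e : {set 'I_n} -> R) c :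
  (0 < n)%N -> 0 <= c ->
  (forall H : {set 'I_n}, #|H| = m.+2 -> cobound b H = 0) ->
  (forall G : {set 'I_n}, #|G| = m ->
     \sum_(w in ~: G) e (w |: G) ^+ 2 <= c * (n%:R - m%:R)) ->
  \sum_(F : {set 'I_n} | #|F| == m.+1) (e F * b F) ^+ 2 <=
    m.+1%:R * c * \sum_(F : {set 'I_n} | #|F| == m.+1) b F ^+ 2.
Proof.
move=> n_gt0 c_ge0 closed e_bound; set a := cobound_adj b.
set N := \sum_(F : {set 'I_n} | #|F| == m.+1) b F ^+ 2.
have N_ge0 : 0 <= N by apply: sumr_ge0 => F _; apply: sqr_ge0.
have nb (F : {set 'I_n}) : #|F| = m.+1 -> n%:R * b F = cobound a F.
  by move=> cF; rewrite cobound_adjK // => w wF; apply: closed; rewrite cardsU1 wF cF.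
have a_norm : \sum_(G : {set 'I_n} | #|G| == m) a G ^+ 2 = n%:R * N.
  transitivity (\sum_(G : {set 'I_n} | #|G| == m) a G * a G).
    by apply: eq_bigr => G _; rewrite expr2.
  rewrite -cobound_adjoint /N mulr_sumr; apply: eq_bigr => F /eqP cF.
  by rewrite -nb //; ring.
have b_sqr (F : {set 'I_n}) : #|F| = m.+1 ->
    n%:R ^+ 2 * b F ^+ 2 <= m.+1%:R * \sum_(v in F) a (F :\ v) ^+ 2.
  move=> cF; rewrite -exprMn nb // /cobound.
  apply: le_trans (cauchy_schwarz _ (sgn R F) (fun v => a (F :\ v))) _.
  by rewrite (eq_bigr (fun=> 1)) ?sumr_const ?cF // => v _; rewrite expr2 sgn_sqr.
have regroup : n%:R ^+ 2 * \sum_(F : {set 'I_n} | #|F| == m.+1) (e F * b F) ^+ 2 <=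
    m.+1%:R * \sum_(G : {set 'I_n} | #|G| == m) \sum_(w in ~: G) e (w |: G) ^+ 2 * a G ^+ 2.
  rewrite -sum_setD1_pairs !mulr_sumr; apply: ler_sum => F /eqP cF.
  under [X in _ <= _ * X]eq_bigr => v vF do rewrite setD1K //.
  rewrite -mulr_sumr exprMn mulrCA [X in _ <= X]mulrCA.
  by apply: ler_wpM2l; [apply: sqr_ge0 | apply: b_sqr].
have link : \sum_(G : {set 'I_n} | #|G| == m) \sum_(w in ~: G) e (w |: G) ^+ 2 * a G ^+ 2 <=
    c * (n%:R - m%:R) * \sum_(G : {set 'I_n} | #|G| == m) a G ^+ 2.
  rewrite mulr_sumr; apply: ler_sum => G /eqP cG.
  rewrite -mulr_suml mulrC [X in _ <= X]mulrC.
  by apply: ler_wpM2l; [apply: sqr_ge0 | apply: e_bound].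
rewrite -(@ler_pM2l _ (n%:R ^+ 2)) ?exprn_gt0 ?ltr0n //.
apply: le_trans regroup _; apply: le_trans (ler_wpM2l (ler0n _ _) link) _.
rewrite a_norm.
have -> : m.+1%:R * (c * (n%:R - m%:R) * (n%:R * N)) =
    (m.+1%:R * c * n%:R * N) * (n%:R - m%:R) :> R by ring.
have -> : n%:R ^+ 2 * (m.+1%:R * c * N) = (m.+1%:R * c * n%:R * N) * n%:R :> R by ring.
apply: ler_wpM2l; first by rewrite !mulr_ge0 ?ler0n.
by rewrite lerBlDr lerDl ler0n.
Qed.

Unset Implicit Arguments.

Theorem proposition3p7 (R : rcfType) (n k : nat) (X : {set {set 'I_n}}) (d f : R) :
  (1 <= k)%N ->
  simplicial_complex X -> complex_dim X k -> complete_skeleton X k ->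
  0 < d -> 0 <= f ->
  (forall F, F \in faces_sz X k.-1 ->
     \sum_(v : 'I_n | v \notin F) ((lk_deg X k F v)%:R - d) ^+ 2
       <= f ^+ 2 * (n%:R - k%:R + 1)) ->
  (forall b : {set 'I_n} -> R, inB X k b -> ip X k b b = 1 ->
     `|ip X k (Aop X k b) b - d| <= k%:R * f) /\
  (forall b z : {set 'I_n} -> R, inB X k b -> ip X k b b = 1 -> ip X k z z = 1 ->
     (forall b' : {set 'I_n} -> R, inB X k b' -> ip X k b' z = 0) ->
     `|ip X k (Aop X k b) z| <= k%:R * f).
Proof.
case: k => [//|m] _ _ [_ [F0 [_ cF0]]] cX _ f_ge0 link_bound.
have n_gt0 : (0 < n)%N by rewrite -(card_ord n) (leq_trans _ (max_card F0)) ?cF0.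
pose e F : R := (updeg X m.+1 F)%:R - d.
have e_bound (G : {set 'I_n}) : #|G| = m ->
    \sum_(w in ~: G) e (w |: G) ^+ 2 <= f ^+ 2 * (n%:R - m%:R).
  move=> cG; rewrite (sum_lk_deg X m.+1 (fun j => (j%:R - d) ^+ 2)).
  have := link_bound G; rewrite /= (faces_sz_complete _ cX) // cG eqxx => /(_ isT).
  by rewrite -natr1 opprD addrA subrK.
have unit (u : {set 'I_n} -> R) :
    ip X m.+1 u u = 1 -> \sum_(F : {set 'I_n} | #|F| == m.+1) u F ^+ 2 = 1.
  by move=> <-; rewrite ip_complete //; apply: eq_bigr => F _; rewrite expr2.
have bound b : inB X m.+1 b -> ip X m.+1 b b = 1 ->
    \sum_(F : {set 'I_n} | #|F| == m.+1) (e F * b F) ^+ 2 <= (m.+1%:R * f) ^+ 2.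
  move=> bB b1.
  apply: le_trans (closed_weighted_bound n_gt0 (sqr_ge0 f) (inB_closed cX bB) e_bound) _.
  rewrite unit // mulr1 exprMn ler_wpM2r ?sqr_ge0 //.
  by rewrite expr2 -natrM ler_nat leq_pmulr.
have kf_ge0 : 0 <= m.+1%:R * f by rewrite mulr_ge0.
split=> [b bB b1 | b z bB b1 z1 orth].
  have := ip_Aop_closed b d cX bB; rewrite b1 mulr1 => ->.
  exact: normr_sum_mul_le kf_ge0 (bound b bB b1) (unit b b1).
have := ip_Aop_closed z d cX bB; rewrite (orth b bB) mulr0 subr0 => ->.
exact: normr_sum_mul_le kf_ge0 (bound b bB b1) (unit z z1).
Qed.
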